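(* Let $T$ be a lush hedge of height $H$. Then for every integer $i\ge 2$, $$\ell_i(T)\ \ge\ 2\sum_{j=i+1}^{H+1}\ell_j(T).$$
   Context: A rooted tree is a finite tree with a distinguished vertex, the root. If $y,z$ are adjacent and the path from the root to $y$ passes through $z$, then $y$ is a child of $z$. In a rooted tree with at least two vertices a leaf is a non-root vertex of degree $1$; in the one-vertex tree $P_1$ the single vertex is both root and leaf. A hedge is a rooted tree which is either $P_1$ or in which all leaves have the same distance to the root. The height $\mathrm{h}(u)$ of a vertex $u$ of a hedge is its distance to a nearest leaf, and the height $H$ of the hedge is the height of its root. $V_i(T)$ denotes the set of vertices of height $i$, and for $i\ge1$, $\ell_i(T):=|V_{i-1}(T)|-|V_i(T)|$ (so $\ell_{H+1}(T)=1$ and $\ell_i(T)=0$ for $i>H+1$). A hedge is lush if every vertex of height at least $2$ has at least three children and every vertex of height $1$ has at least two children. *)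

From mathcomp Require Import all_boot all_order all_algebra.
Set Implicit Arguments. Unset Strict Implicit. Unset Printing Implicit Defensive.

(* A finite rooted tree, represented (up to isomorphism) as a rose tree:
   a node together with the list of subtrees rooted at its children. *)
Inductive rtree : Type := Node of seq rtree.

Definition children (t : rtree) : seq rtree := let: Node cs := t in cs.

(* All vertices of t, each represented by the subtree rooted at it
   (one list entry per vertex). *)
Fixpoint nodes (t : rtree) : seq rtree :=
  let: Node cs := t in t :: flatten (map nodes cs).

(* Depths of the leaves of t (a leaf is a childless vertex; the root has a
   child unless t = P_1, in which case the root is the unique leaf). *)
Fixpoint leaf_depths (t : rtree) : seq nat :=
  match t with
  | Node [::] => [:: 0]
  | Node cs => map S (flatten (map leaf_depths cs))
  end.

Definition is_hedge (t : rtree) : bool := constant (leaf_depths t).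

Fixpoint hgt (t : rtree) : nat :=
  match t with
  | Node (c :: cs) => (foldr minn (hgt c) (map hgt cs)).+1
  | Node [::] => 0
  end.

Definition Vcard (t : rtree) (i : nat) : nat :=
  count (fun s => hgt s == i) (nodes t).

Definition ell (t : rtree) (i : nat) : int :=
  (Vcard t i.-1)%:Z - (Vcard t i)%:Z.

Definition lush (t : rtree) : bool :=
  all (fun s => ((2 <= hgt s) ==> (3 <= size (children s)))
             && ((hgt s == 1) ==> (2 <= size (children s)))) (nodes t).

From mathcomp Require Import all_boot all_order all_algebra.
From mathcomp Require Import zify.
Import GRing.Theory Num.Theory.

Set Implicit Arguments.
Unset Strict Implicit.
Unset Printing Implicit Defensive.

(* A hedge of height h is exactly a tree all of whose leaves
   lie at depth h ([balanced h]); in such a tree every child of a vertex of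
   height k has height k - 1, so the height of a vertex is determined by its
   depth.  Writing V_i for |V_i(T)|, the argument rests on two facts about a
   balanced tree T of height h:
   - V_i = 0 for i > h, so that the sum of the ell_j for j = i+1 .. h+1
     telescopes to V_i;
   - if moreover T is lush, then 3 V_i <= V_{i-1} for every i >= 2: each
     vertex of height i >= 2 has at least three children, all of height i-1.
   Hence 2 * sum_{j > i} ell_j = 2 V_i <= V_{i-1} - V_i = ell_i. *)

Fixpoint all_prop (P : rtree -> Prop) (cs : seq rtree) : Prop :=
  if cs is c :: cs' then P c /\ all_prop P cs' else True.

Fixpoint rtree_nested_ind (P : rtree -> Prop)
    (IH : forall cs, all_prop P cs -> P (Node cs)) (t : rtree) : P t :=
  let: Node cs := t in
  IH cs ((fix in_children (cs : seq rtree) : all_prop P cs :=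
            if cs is c :: cs' return all_prop P cs
            then conj (rtree_nested_ind IH c) (in_children cs')
            else I) cs).

Lemma all_flatten (T : Type) (a : pred T) (ss : seq (seq T)) :
  all a (flatten ss) = all (all a) ss.
Proof. by elim: ss => //= s ss IH; rewrite all_cat IH. Qed.

Lemma leaf_depths_neq0 (t : rtree) : leaf_depths t != [::].
Proof.
elim/rtree_nested_ind: t => [[|c cs]] //= [IHc _].
by case: (leaf_depths c) IHc.
Qed.

Fixpoint balanced (h : nat) (t : rtree) : bool :=
  let: Node cs := t in
  if cs is [::] then h == 0 else (h != 0) && all (balanced h.-1) cs.

Lemma balanced_leaf_depths (d : nat) (t : rtree) :
  all (pred1 d) (leaf_depths t) -> balanced d t.
Proof.
elim: d t => [|d IH] [[|c cs]] //=; rewrite -/(leaf_depths c) all_map.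
- by case: (leaf_depths c) (leaf_depths_neq0 c).
- rewrite (eq_all (a2 := pred1 d)) => [|x]; last exact: eqSS.
  rewrite -[_ ++ _]/(flatten (map leaf_depths (c :: cs))) all_flatten all_map.
  exact: (sub_all IH).
Qed.

Lemma hgt_balanced (h : nat) (t : rtree) : balanced h t -> hgt t = h.
Proof.
elim: h t => [|h IH] [[|c cs]] //= /andP[/IH -> bal_cs]; congr _.+1.
by elim: cs bal_cs => //= c' cs IHcs /andP[/IH -> /IHcs ->]; rewrite minnn.
Qed.

Lemma sumn_map_const (T : Type) (f : T -> nat) (k : nat) (s : seq T) :
  all (fun x => f x == k) s -> sumn (map f s) = k * size s.
Proof.
elim: s => [|x s IH] /=; first by rewrite muln0.
by case/andP=> /eqP -> /IH ->; rewrite mulnS.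
Qed.

Lemma sumn_map_scale_le (T : Type) (a : nat) (f g : T -> nat) (s : seq T) :
  all (fun x => a * f x <= g x) s -> a * sumn (map f s) <= sumn (map g s).
Proof.
elim: s => [|x s IH] /=; first by rewrite muln0.
by case/andP=> le_x /IH le_s; rewrite mulnDr leq_add.
Qed.

Lemma Vcard_node (cs : seq rtree) (i : nat) :
  Vcard (Node cs) i = (hgt (Node cs) == i) + sumn (map (Vcard^~ i) cs).
Proof. by rewrite /Vcard /= count_flatten -map_comp. Qed.

Lemma balanced_children (h : nat) (cs : seq rtree) :
  balanced h (Node cs) -> all (balanced h.-1) cs.
Proof. by case: cs => //= c cs /andP[]. Qed.

Lemma Vcard_balanced_gt (h : nat) (t : rtree) (i : nat) :
  balanced h t -> h < i -> Vcard t i = 0.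
Proof.
elim: h t => [|h IH] [cs] bal_t lt_hi; rewrite Vcard_node (hgt_balanced bal_t).
all: rewrite ltn_eqF //= (sumn_map_const (k := 0)) ?mul0n //.
- by case: cs bal_t.
- by apply: sub_all (balanced_children bal_t) => c bal_c; rewrite IH // ltnW.
Qed.

Lemma Vcard_balanced_root (h : nat) (t : rtree) : balanced h t -> Vcard t h = 1.
Proof.
case: t => cs bal_t; rewrite Vcard_node (hgt_balanced bal_t) eqxx.
rewrite (sumn_map_const (k := 0)) //; case: cs bal_t => [|c cs] // bal_t.
have h_gt0 : 0 < h by case: h bal_t.
apply: sub_all (balanced_children bal_t) => c' bal_c'.
by rewrite (Vcard_balanced_gt bal_c') // prednK.
Qed.

Definition lush_at (s : rtree) : bool :=
  ((2 <= hgt s) ==> (3 <= size (children s)))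
  && ((hgt s == 1) ==> (2 <= size (children s))).

Lemma lush_node (cs : seq rtree) :
  lush (Node cs) = lush_at (Node cs) && all lush cs.
Proof. by rewrite /lush /= all_flatten all_map. Qed.

(* Key counting inequality: in a lush balanced tree, 3 |V_i| <= |V_{i-1}|
   for i >= 2, since every vertex of height i has at least three children,
   each of height i - 1. *)
Lemma Vcard_lush (h : nat) (t : rtree) (i : nat) :
  balanced h t -> lush t -> 1 < i -> 3 * Vcard t i <= Vcard t i.-1.
Proof.
move=> bal_t; have [lt_hi _ _|le_ih] := ltnP h i.
  by rewrite (Vcard_balanced_gt bal_t lt_hi).
elim: h t i bal_t le_ih => [|h IH] [cs] i bal_t le_ih; first by case: i le_ih.
rewrite lush_node => /andP[lush_root lush_cs] lt1i.
have hgt_t := hgt_balanced bal_t.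
have [eq_ih|ne_ih] := eqVneq i h.+1.
  rewrite eq_ih (Vcard_balanced_root bal_t) Vcard_node hgt_t gtn_eqF //=.
  rewrite (sumn_map_const (k := 1)) ?mul1n.
    by move: lush_root; rewrite /lush_at hgt_t -eq_ih lt1i => /andP[].
  by apply: sub_all (balanced_children bal_t) => c /Vcard_balanced_root ->.
rewrite !Vcard_node hgt_t eq_sym (negbTE ne_ih) /=.
apply: leq_trans (leq_addl _ _); apply: sumn_map_scale_le.
have le_ih' : i <= h by rewrite -ltnS ltn_neqAle ne_ih.
have children_ok : all (predI (balanced h) lush) cs.
  by rewrite all_predI lush_cs andbT (balanced_children bal_t).
by apply: sub_all children_ok => c /andP[bal_c lush_c]; apply: IH.
Qed.

Lemma hedge_balanced (t : rtree) : is_hedge t -> balanced (hgt t) t.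
Proof.
rewrite /is_hedge.
case ld_t: (leaf_depths t) (leaf_depths_neq0 t) => [|d ds] //= _ const_ds.
have bal_t : balanced d t.
  by apply: balanced_leaf_depths; rewrite ld_t /= eqxx.
by rewrite (hgt_balanced bal_t).
Qed.

Local Open Scope ring_scope.

Lemma sum_ell_telescope (t : rtree) (m n : nat) : (m <= n)%N ->
  \sum_(m.+1 <= j < n.+1) ell t j = (Vcard t m)%:Z - (Vcard t n)%:Z.
Proof.
elim: n => [|n IH]; first by rewrite leqn0 => /eqP ->; rewrite big_geq // subrr.
rewrite leq_eqVlt => /predU1P[-> | lt_mn]; first by rewrite big_geq // subrr.
by rewrite big_nat_recr //= IH // /ell /= addrA subrK.
Qed.

Lemma sum_ell_tail (h : nat) (t : rtree) (i : nat) : balanced h t ->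
  \sum_(i.+1 <= j < h.+2) ell t j = (Vcard t i)%:Z.
Proof.
move=> bal_t; have [le_ih|lt_hi] := leqP i h.+1.
  by rewrite sum_ell_telescope // (Vcard_balanced_gt bal_t (ltnSn h)) subr0.
by rewrite big_geq 1?ltnW // (Vcard_balanced_gt bal_t (ltnW lt_hi)).
Qed.

Theorem mainTheorem1 (T : rtree) :
  is_hedge T -> lush T ->
  forall i : nat, (2 <= i)%N ->
    2%:R * (\sum_(i.+1 <= j < (hgt T).+2) ell T j) <= ell T i.
Proof.
move=> hedge_T lush_T i le2i; have bal_T := hedge_balanced hedge_T.
have le_V := Vcard_lush bal_T lush_T le2i.
rewrite (sum_ell_tail i bal_T) /ell; lia.
Qed.
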